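(* Let $n\ge 2$ and let $F_1,\ldots,F_n$ be finite fields with $|F_1|\le\cdots\le|F_n|$. If $\mathrm{char}(F_1)=2$, then $$\chi\big(\mathrm{Reg}(\Gamma(F_1\times\cdots\times F_n))\big)=\omega\big(\mathrm{Reg}(\Gamma(F_1\times\cdots\times F_n))\big)=(|F_2|-1)\cdots(|F_n|-1).$$
   Context: For a commutative ring $R$ with identity, $Z(R)$ is the set of zero-divisors (including $0$) and $\mathrm{Reg}(R)=R\setminus Z(R)$. The total graph $T(\Gamma(R))$ is the simple graph with vertex set $R$ in which distinct $x,y$ are adjacent iff $x+y\in Z(R)$; $\mathrm{Reg}(\Gamma(R))$ is its induced subgraph on $\mathrm{Reg}(R)$. $\chi$ and $\omega$ denote chromatic and clique number. *)

From HB Require Import structures.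
From mathcomp Require Import all_boot all_order all_algebra all_field.
Set Implicit Arguments. Unset Strict Implicit. Unset Printing Implicit Defensive.
Import GRing.Theory.
Local Open Scope ring_scope.

(* The graph has vertex set V (a subset of T) and adjacency relation adj;
   only pairs of distinct vertices of V matter (induced subgraph on V). *)
Section Graph.
Variables (T : finType) (V : {pred T}) (adj : rel T).

Definition colorable (k : nat) : bool :=
  [exists c : {ffun T -> 'I_k}, [forall x, forall y,
     [&& x \in V, y \in V, x != y & adj x y] ==> (c x != c y)]].

(* chromatic number: least k with a proper k-colouring (#|T| colours always suffice) *)
Definition chromatic_number : nat :=
  \big[minn/#|T|]_(k < #|T|.+1 | colorable k) k.

Definition is_clique (S : {set T}) : bool :=
  (S \subset V) && [forall x in S, forall y in S, (x != y) ==> adj x y].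

Definition clique_number : nat := \max_(S : {set T} | is_clique S) #|S|.
End Graph.

Section Product.
Variables (n : nat) (F : 'I_n -> finFieldType).

Definition prodF : finType := {dffun forall i : 'I_n, F i}.

Definition pzero : prodF := [ffun i => (0 : F i)].
Definition padd (x y : prodF) : prodF := [ffun i => x i + y i].
Definition pmul (x y : prodF) : prodF := [ffun i => x i * y i].

Definition zero_divisor (x : prodF) : bool :=
  (x == pzero) || [exists y : prodF, (y != pzero) && (pmul x y == pzero)].

Definition regular (x : prodF) : bool := ~~ zero_divisor x.

Definition total_adj : rel prodF := fun x y => zero_divisor (padd x y).
End Product.

From HB Require Import structures.
From mathcomp Require Import all_boot all_order all_algebra all_field perm.
Set Implicit Arguments. Unset Strict Implicit. Unset Printing Implicit Defensive.
Import GRing.Theory.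
Local Open Scope ring_scope.

(* Let F_i0 be a smallest factor, of characteristic 2. The regular elements z
   with z i0 = 1 form a clique, as any two of them sum to 0 at i0, and there
   are prod_(i != i0) (|F i| - 1) of them. Conversely, pick for every i a map
   psi_i : F_i0 -> F_i that keeps nonzero elements nonzero and such that
   psi_i a + psi_i b = 0 forces a = b (this uses |F_i0| <= |F_i|). Then the
   normalization x |-> (x_i * psi_i (x_i0))_i, with 1 at i0, maps Reg into the
   clique and is a proper colouring; hence chi <= #clique <= omega <= chi. *)

HB.instance Definition _ := SemiGroup.isComLaw.Build nat minn minnA minnC.

Section CliqueColoring.
Variables (T : finType) (V : {pred T}) (adj : rel T).

Lemma clique_card_le_colors (S : {set T}) k :
  is_clique V adj S -> colorable V adj k -> (#|S| <= k)%N.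
Proof.
case/andP=> /subsetP sSV /forall_inP cliqueS /existsP[c /forallP properc].
suff injc : {in S &, injective c}.
  by rewrite -(card_in_imset injc) (leq_trans (max_card _)) ?card_ord.
move=> x y xS yS cxy; apply/eqP/negPn/negP=> neqxy.
have /forallP/(_ y) := properc x.
by rewrite !sSV // neqxy (implyP (forall_inP (cliqueS x xS) y yS) neqxy) cxy eqxx.
Qed.

Lemma chromatic_number_min k :
  colorable V adj k -> (k <= #|T|)%N -> (chromatic_number V adj <= k)%N.
Proof.
rewrite -ltnS => colk ltk; rewrite /chromatic_number.
rewrite (big_rem_AC _ _ _ _ (mem_index_enum (Ordinal ltk))) /=.
by rewrite colk geq_minl.
Qed.

Lemma clique_card_le_chromatic_number (S : {set T}) :
  is_clique V adj S -> (#|S| <= chromatic_number V adj)%N.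
Proof.
move=> cliqueS; apply: (big_ind (fun m => #|S| <= m)%N); first exact: max_card.
  by move=> a b Sa Sb; rewrite leq_min Sa Sb.
by move=> k colk; apply: clique_card_le_colors.
Qed.

Lemma chromatic_clique_number_eq (S : {set T}) :
  is_clique V adj S -> colorable V adj #|S| ->
  chromatic_number V adj = #|S| /\ clique_number V adj = #|S|.
Proof.
move=> cliqueS colS.
have chiS : chromatic_number V adj = #|S|.
  apply/eqP; rewrite eqn_leq clique_card_le_chromatic_number // andbT.
  exact: chromatic_number_min (max_card _).
split=> //; apply/eqP; rewrite eqn_leq (leq_bigmax_cond _ cliqueS) andbT.
by apply/bigmax_leqP=> S' cliqueS'; rewrite -chiS clique_card_le_chromatic_number.
Qed.

End CliqueColoring.

Section SumSeparatingMap.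
Variables (K L : finFieldType).
Hypothesis leKL : (#|K| <= #|L|)%N.

Definition enum_embedding (a : K) : L := enum_val (widen_ord leKL (enum_rank a)).

Lemma enum_embedding_inj : injective enum_embedding.
Proof. by move=> a b /enum_val_inj/(congr1 val)/=/val_inj/enum_rank_inj. Qed.

(* In characteristic 2, p a + p b = 0 means p a = p b, so an injection that
   fixes 0 works; otherwise 1 + 1 != 0, so the constant 1 works. *)
Definition sum_separating_map : K -> L :=
  if 2%N \in [pchar L] then
    fun a => tperm (enum_embedding 0) 0 (enum_embedding a)
  else fun=> 1.

Lemma sum_separating_map_neq0 a : a != 0 -> sum_separating_map a != 0.
Proof.
rewrite /sum_separating_map; case: ifP => _ nz_a; last exact: oner_neq0.
apply: contra nz_a => /eqP pa0; apply/eqP/enum_embedding_inj.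
by apply: (@perm_inj _ (tperm (enum_embedding 0) 0)); rewrite pa0 tpermL.
Qed.

Lemma sum_separating_map_sum_eq0 a b :
  sum_separating_map a + sum_separating_map b = 0 -> a = b.
Proof.
rewrite /sum_separating_map; case: ifP => [charL2|charLn2].
  by move/eqP; rewrite addr_eq0 oppr_pchar2 // => /eqP/perm_inj/enum_embedding_inj.
by move=> sum11; case/negP: charLn2; rewrite inE /= -sum11 eqxx.
Qed.

End SumSeparatingMap.

Section ProductOfFields.
Variables (n : nat) (F : 'I_n -> finFieldType).

Lemma regularE (i0 : 'I_n) (x : prodF F) : regular x = [forall i, x i != 0].
Proof.
rewrite /regular /zero_divisor negb_or; apply/andP/forallP.
  case=> _ /existsPn no_annihilator i; apply: contraNneq (no_annihilator
    [ffun j => if j == i then 1 else 0]) => xi0; apply/andP; split.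
    by apply/eqP=> /ffunP/(_ i); rewrite !ffunE eqxx; apply/eqP/oner_neq0.
  apply/eqP/ffunP=> j; rewrite !ffunE.
  by case: eqVneq => [->|]; rewrite ?xi0 ?mul0r ?mulr0.
move=> nz_x; split.
  by apply: contra (nz_x i0) => /eqP->; rewrite ffunE.
apply/existsPn=> y; apply/negP=> /andP[nz_y /eqP/ffunP xy0].
case/negP: nz_y; apply/eqP/ffunP=> j; move: (xy0 j); rewrite !ffunE => /eqP.
by rewrite mulf_eq0 (negbTE (nz_x j)) => /eqP.
Qed.

Lemma total_adjE (i0 : 'I_n) (x y : prodF F) :
  total_adj x y = [exists i, x i + y i == 0].
Proof.
rewrite /total_adj -[zero_divisor _]negbK -/(regular _) (regularE i0) negb_forall.
by apply: eq_existsb => i; rewrite ffunE negbK.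
Qed.

Variable i0 : 'I_n.

Definition unit_slice : {set prodF F} := [set z | regular z & z i0 == 1].

Lemma card_unit_slice : #|unit_slice| = (\prod_(i | i != i0) (#|F i| - 1))%N.
Proof.
pose A i := if i == i0 then pred1 (1 : F i) else predC1 (0 : F i).
have -> : #|unit_slice| = #|(family A : simpl_pred (prodF F))|.
  apply: eq_card => z; rewrite !inE (regularE i0); apply/andP/familyP.
    case=> /forallP nz_z /eqP z_i0 i; rewrite /A; case: eqP => [->|_].
      by rewrite inE z_i0.
    by rewrite inE nz_z.
  move=> zA; have := zA i0; rewrite /A eqxx inE => z_i0; split=> //.
  apply/forallP=> i; have := zA i; rewrite /A; case: eqP => [->|_] /=.
    by rewrite inE => /eqP->; apply: oner_neq0.
  by rewrite inE.
rewrite card_family foldrE big_map big_enum /= (bigD1 i0) //=.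
rewrite {1}/A eqxx card1 mul1n; apply: eq_bigr => i /negbTE ni0.
by rewrite /A ni0 cardC1 subn1.
Qed.

End ProductOfFields.

Section RegularTotalGraph.
Variables (n : nat) (F : 'I_n -> finFieldType) (i0 : 'I_n).
Hypothesis F_i0_min : forall i, (#|F i0| <= #|F i|)%N.
Hypothesis F_i0_char2 : 2%N \in [pchar (F i0)].

Lemma unit_slice_clique :
  is_clique (regular (F:=F)) (total_adj (F:=F)) (unit_slice F i0).
Proof.
apply/andP; split; first by apply/subsetP=> z; rewrite inE => /andP[].
apply/forall_inP=> x; rewrite inE => /andP[_ /eqP x_i0].
apply/forall_inP=> y; rewrite inE => /andP[_ /eqP y_i0]; apply/implyP=> _.
rewrite (total_adjE i0); apply/existsP; exists i0.
by rewrite x_i0 y_i0 addrr_pchar2.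
Qed.

Definition normalize (x : prodF F) : prodF F :=
  [ffun i => if i == i0 then 1 else x i * sum_separating_map (F_i0_min i) (x i0)].

Lemma normalize_unit_slice x : regular x -> normalize x \in unit_slice F i0.
Proof.
rewrite inE !(regularE i0) ffunE !eqxx andbT => /forallP nz_x.
apply/forallP=> i; rewrite ffunE; case: ifP => _; first exact: oner_neq0.
by rewrite mulf_neq0 ?sum_separating_map_neq0 ?nz_x.
Qed.

(* Equal normalizations force x i0 != y i0, hence x i0 + y i0 != 0 in
   characteristic 2; and x i + y i = 0 elsewhere would make the two values of
   sum_separating_map at x i0 and y i0 sum to 0. *)
Lemma normalize_eq_nonadjacent x y : regular x -> regular y -> x != y ->
  normalize x = normalize y -> ~~ total_adj x y.
Proof.
rewrite !(regularE i0) (total_adjE i0).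
move=> /forallP nz_x /forallP nz_y neq_xy /ffunP eq_xy.
have {}eq_xy i : i != i0 -> x i * sum_separating_map (F_i0_min i) (x i0) =
                          y i * sum_separating_map (F_i0_min i) (y i0).
  by move=> /negbTE ni0; move: (eq_xy i); rewrite !ffunE ni0.
have neq_x_i0 : x i0 != y i0.
  apply: contraNneq neq_xy => x_y_i0; apply/eqP/ffunP=> i.
  have [->|ni0] := eqVneq i i0; first exact: x_y_i0.
  by move: (eq_xy i ni0); rewrite x_y_i0; apply/mulIf/sum_separating_map_neq0/nz_y.
apply/existsPn=> i; have [->|ni0] := eqVneq i i0.
  by rewrite -[y i0](oppr_pchar2 F_i0_char2) subr_eq0.
apply/negP; rewrite addr_eq0 => /eqP y_i; move: (eq_xy i ni0).
rewrite y_i mulNr => /eqP.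
rewrite eq_sym -addr_eq0 -mulrDr mulf_eq0 (negbTE (nz_y i)).
by move=> /eqP/sum_separating_map_sum_eq0/eqP; rewrite eq_sym (negbTE neq_x_i0).
Qed.

Lemma unit_slice_colorable :
  colorable (regular (F:=F)) (total_adj (F:=F)) #|unit_slice F i0|.
Proof.
pose ones : prodF F := [ffun i => 1].
have ones_in : ones \in unit_slice F i0.
  rewrite inE (regularE i0) ffunE eqxx andbT.
  by apply/forallP=> i; rewrite ffunE oner_neq0.
apply/existsP; exists [ffun x => enum_rank_in ones_in (normalize x)].
apply/forallP=> x; apply/forallP=> y; apply/implyP=> /and4P[reg_x reg_y neq_xy].
apply: contraL; rewrite !ffunE => /eqP/(enum_rank_in_inj
  (normalize_unit_slice reg_x) (normalize_unit_slice reg_y)).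
exact: normalize_eq_nonadjacent.
Qed.

End RegularTotalGraph.

Theorem lemma19 (n : nat) (F : 'I_n -> finFieldType)
  (hn : (2 <= n)%N)
  (hsize : forall i j : 'I_n, (i <= j)%N -> (#|F i| <= #|F j|)%N)
  (hchar : forall i : 'I_n, nat_of_ord i = 0%N -> 2%N \in [pchar (F i)]) :
  chromatic_number (regular (F:=F)) (total_adj (F:=F))
    = (\prod_(i < n | (0 < i)%N) (#|F i| - 1))%N /\
  clique_number (regular (F:=F)) (total_adj (F:=F))
    = (\prod_(i < n | (0 < i)%N) (#|F i| - 1))%N.
Proof.
pose i0 : 'I_n := Ordinal (ltnW hn).
have F_i0_min i : (#|F i0| <= #|F i|)%N by apply: hsize.
have card_slice :
    #|unit_slice F i0| = (\prod_(i < n | (0 < i)%N) (#|F i| - 1))%N.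
  by rewrite card_unit_slice; apply: eq_bigl => i; rewrite -val_eqE lt0n.
rewrite -card_slice; apply: chromatic_clique_number_eq.
  exact: unit_slice_clique (hchar i0 erefl).
exact: unit_slice_colorable F_i0_min (hchar i0 erefl).
Qed.
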